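(* Let $A$ and $B$ be categories with variances, let $(R_1,L_1)$ be a span on $A$ and $(R_2,L_2)$ a span on $B$, and let $F\colon A\times B\rightarrow C$ be a functor of variance with respect to the product variance on $A\times B$. Let $L=L_1\times L_2\colon R_1\times R_2\rightarrow A\times B$. Assume that for every object $b$ of $B$ the end $\int_{L_1}F^b$ exists with universal wedge $\omega^b=(\omega^b_x\colon\int_{L_1}F^b\rightarrow F(L_1(x),b))_{x\in R_1}$, and let $\int_{L_1}F\colon B\rightarrow C$ be the unique functor of variance with $(\int_{L_1}F)(b)=\int_{L_1}F^b$ on objects and satisfying $F(id_{L_1(x)},g)\circ\omega^{g_s}_x=\omega^{g_t}_x\circ(\int_{L_1}F)(g)$ for all objects $x$ of $R_1$ and morphisms $g$ of $B$. Then the assignment $$(c,\theta)\mapsto (c,\tilde\theta),\qquad \tilde\theta_{x,y}=\omega^{L_2(y)}_x\circ\theta_y\ \ \text{for objects } (x,y) \text{ of } R_1\times R_2,$$ (acting as the identity on underlying morphisms) defines an isomorphism between the category of $L_2$-wedges of $\int_{L_1}F$ and the category of $L$-wedges of $F$. In particular, the end $\int_L F$ exists if and only if the end $\int_{L_2}\int_{L_1}F$ exists, and if one exists, they agree.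
   Context: A variance on a category $A$ is a pair $(E,M)$ of subcategories containing all objects such that every morphism $f$ factors uniquely as $f=me$ and uniquely as $f=e'm'$ with $e,e'$ in $E$ (covariant morphisms) and $m,m'$ in $M$ (contravariant morphisms). For $f\colon x\rightarrow y$ write $f=f^mf^e$ with $f^e\colon x\rightarrow f_t$ in $E$, $f^m\colon f_t\rightarrow y$ in $M$, and $f=f_ef_m$ with $f_m\colon x\rightarrow f_s$ in $M$, $f_e\colon f_s\rightarrow y$ in $E$. A functor $F\colon A\rightarrow C$ of variance $(E,M)$ assigns objects to objects and to each morphism $f$ a morphism $F(f)\colon F(f_s)\rightarrow F(f_t)$, preserving identities and satisfying, for composable $x\xrightarrow{f}y\xrightarrow{g}z$, $F(gf)=F((g^ef^m)^e)F(f)F((g_mf_e)_m)=F((g^ef^m)^m)F(g)F((g_mf_e)_e)$. The product variance on $A\times B$: a morphism $(f,g)$ is covariant (resp. contravariant) iff $f$ and $g$ both are. For $F\colon A\times B\rightarrow C$ of variance and an object $b$ of $B$, $F^b\colon A\rightarrow C$ is the functor of variance $F^b(x)=F(x,b)$, $F^b(f)=F(f,id_b)$. A span on $A$ is a pair $(R,L)$ of a category $R$ and a functor $L\colon R\rightarrow A$. For a functor of variance $G\colon A\rightarrow C$, an $L$-wedge of $G$ is a pair $(c,\eta)$ with $c$ an object of $C$ and $\eta=(\eta_x\colon c\rightarrow G(Lx))_{x\in R}$ satisfying $G(L(f)^e)\eta_x=G(L(f)^m)\eta_y$ for every morphism $f\colon x\rightarrow y$ of $R$; a morphism $(c,\eta)\rightarrow(d,\theta)$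 of $L$-wedges is a morphism $h\colon c\rightarrow d$ of $C$ with $\theta_x h=\eta_x$ for all $x$. The end $\int_L G$ is a terminal $L$-wedge, whose family is called the universal wedge. *)

(* Categories are encoded "arrows-only": a type of objects, a
   type of arrows with domain/codomain maps, identities and a total
   composition operation whose laws are required only for composable pairs.
   This avoids dependent hom-types (and the transports they would force in
   the definition of functors of variance). *)
Set Implicit Arguments.
Unset Strict Implicit.

Record Cat := {
  Ob : Type;
  Arr : Type;
  dom : Arr -> Ob;
  cod : Arr -> Ob;
  idc : Ob -> Arr;
  comp : Arr -> Arr -> Arr;  (* comp g f = g o f *)
  dom_id : forall x, dom (idc x) = x;
  cod_id : forall x, cod (idc x) = x;
  dom_comp : forall f g, cod f = dom g -> dom (comp g f) = dom f;
  cod_comp : forall f g, cod f = dom g -> cod (comp g f) = cod g;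
  comp_idl : forall f, comp (idc (cod f)) f = f;
  comp_idr : forall f, comp f (idc (dom f)) = f;
  comp_assoc : forall f g h, cod f = dom g -> cod g = dom h ->
      comp h (comp g f) = comp (comp h g) f
}.

Arguments dom {c} _.
Arguments cod {c} _.
Arguments idc {c} _.
Arguments comp {c} _ _.

Definition prodCat (A B : Cat) : Cat.
Proof.
  refine {| Ob := Ob A * Ob B;
            Arr := Arr A * Arr B;
            dom := fun f => (dom (fst f), dom (snd f));
            cod := fun f => (cod (fst f), cod (snd f));
            idc := fun x => (idc (fst x), idc (snd x));
            comp := fun g f => (comp (fst g) (fst f), comp (snd g) (snd f)) |}.
  - intros [x y]; simpl; rewrite !dom_id; reflexivity.
  - intros [x y]; simpl; rewrite !cod_id; reflexivity.
  - intros [f1 f2] [g1 g2] H; injection H; intros; simpl in *;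
      rewrite !dom_comp; auto.
  - intros [f1 f2] [g1 g2] H; injection H; intros; simpl in *;
      rewrite !cod_comp; auto.
  - intros [f1 f2]; simpl; rewrite !comp_idl; reflexivity.
  - intros [f1 f2]; simpl; rewrite !comp_idr; reflexivity.
  - intros [f1 f2] [g1 g2] [h1 h2] H1 H2; injection H1; injection H2; intros;
      simpl in *; rewrite !comp_assoc; auto.
Defined.

(* The (unique) factorizations are recorded:
     f = um f o ue f   (ue f = f^e : x -> f_t,  um f = f^m : f_t -> y)
     f = le f o lm f   (lm f = f_m : x -> f_s,  le f = f_e : f_s -> y). *)
Record variance (A : Cat) := {
  vE : Arr A -> Prop;
  vM : Arr A -> Prop;
  vE_id : forall x, vE (idc x);
  vM_id : forall x, vM (idc x);
  vE_comp : forall f g, cod f = dom g -> vE f -> vE g -> vE (comp g f);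
  vM_comp : forall f g, cod f = dom g -> vM f -> vM g -> vM (comp g f);
  ue : Arr A -> Arr A;
  um : Arr A -> Arr A;
  lm : Arr A -> Arr A;
  le : Arr A -> Arr A;
  ue_E : forall f, vE (ue f);
  um_M : forall f, vM (um f);
  ue_cd : forall f, cod (ue f) = dom (um f);
  ue_eq : forall f, comp (um f) (ue f) = f;
  ue_uniq : forall f e m, vE e -> vM m -> cod e = dom m -> comp m e = f ->
      e = ue f /\ m = um f;
  lm_M : forall f, vM (lm f);
  le_E : forall f, vE (le f);
  lm_cd : forall f, cod (lm f) = dom (le f);
  lm_eq : forall f, comp (le f) (lm f) = f;
  lm_uniq : forall f m e, vM m -> vE e -> cod m = dom e -> comp e m = f ->
      m = lm f /\ e = le f
}.

Definition vtgt (A : Cat) (V : variance A) (f : Arr A) : Ob A := cod (ue V f).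
Definition vsrc (A : Cat) (V : variance A) (f : Arr A) : Ob A := cod (lm V f).

Lemma pair_inj_fst {X Y : Type} (a b : X * Y) : a = b -> fst a = fst b.
Proof. intros ->; reflexivity. Qed.
Lemma pair_inj_snd {X Y : Type} (a b : X * Y) : a = b -> snd a = snd b.
Proof. intros ->; reflexivity. Qed.

Definition prodVar (A B : Cat) (VA : variance A) (VB : variance B)
  : variance (prodCat A B).
Proof.
  refine (@Build_variance (prodCat A B)
            (fun f : Arr A * Arr B => vE VA (fst f) /\ vE VB (snd f))
            (fun f : Arr A * Arr B => vM VA (fst f) /\ vM VB (snd f))
            _ _ _ _
            (fun f : Arr A * Arr B => (ue VA (fst f), ue VB (snd f)))
            (fun f : Arr A * Arr B => (um VA (fst f), um VB (snd f)))
            (fun f : Arr A * Arr B => (lm VA (fst f), lm VB (snd f)))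
            (fun f : Arr A * Arr B => (le VA (fst f), le VB (snd f)))
            _ _ _ _ _ _ _ _ _ _).
  - intros x; split; apply vE_id.
  - intros x; split; apply vM_id.
  - intros f g H [H1 H2] [H3 H4]; split; simpl;
      [apply (@vE_comp _ VA) | apply (@vE_comp _ VB)]; auto;
      [apply (pair_inj_fst H) | apply (pair_inj_snd H)].
  - intros f g H [H1 H2] [H3 H4]; split; simpl;
      [apply (@vM_comp _ VA) | apply (@vM_comp _ VB)]; auto;
      [apply (pair_inj_fst H) | apply (pair_inj_snd H)].
  - intros f; split; apply ue_E.
  - intros f; split; apply um_M.
  - intros f; simpl; rewrite !ue_cd; reflexivity.
  - intros [f1 f2]; simpl; rewrite !ue_eq; reflexivity.
  - intros [f1 f2] [e1 e2] [m1 m2] [H1 H2] [H3 H4] H5 H6; simpl in *.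
    injection H5; injection H6; intros.
    destruct (@ue_uniq _ VA f1 _ _ H1 H3) as [-> ->]; auto.
    destruct (@ue_uniq _ VB f2 _ _ H2 H4) as [-> ->]; auto.
  - intros f; split; apply lm_M.
  - intros f; split; apply le_E.
  - intros f; simpl; rewrite !lm_cd; reflexivity.
  - intros [f1 f2]; simpl; rewrite !lm_eq; reflexivity.
  - intros [f1 f2] [m1 m2] [e1 e2] [H1 H2] [H3 H4] H5 H6; simpl in *.
    injection H5; injection H6; intros.
    destruct (@lm_uniq _ VA f1 _ _ H1 H3) as [-> ->]; auto.
    destruct (@lm_uniq _ VB f2 _ _ H2 H4) as [-> ->]; auto.
Defined.

Record functor (R A : Cat) := {
  fob : Ob R -> Ob A;
  fmor : Arr R -> Arr A;
  fdom : forall f, dom (fmor f) = fob (dom f);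
  fcod : forall f, cod (fmor f) = fob (cod f);
  fid : forall x, fmor (idc x) = idc (fob x);
  fcomp : forall f g, cod f = dom g -> fmor (comp g f) = comp (fmor g) (fmor f)
}.

Definition prodFunctor (R1 A R2 B : Cat) (L1 : functor R1 A) (L2 : functor R2 B)
  : functor (prodCat R1 R2) (prodCat A B).
Proof.
  refine (@Build_functor (prodCat R1 R2) (prodCat A B)
            (fun x : Ob R1 * Ob R2 => (fob L1 (fst x), fob L2 (snd x)))
            (fun f : Arr R1 * Arr R2 => (fmor L1 (fst f), fmor L2 (snd f)))
            _ _ _ _).
  - intros f; simpl; rewrite !fdom; reflexivity.
  - intros f; simpl; rewrite !fcod; reflexivity.
  - intros x; simpl; rewrite !fid; reflexivity.
  - intros f g H; simpl; rewrite (fcomp L1 (pair_inj_fst H)),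
      (fcomp L2 (pair_inj_snd H)); reflexivity.
Defined.

Record vfunctor (A : Cat) (V : variance A) (C : Cat) := {
  vfob : Ob A -> Ob C;
  vfmor : Arr A -> Arr C;
  vfdom : forall f, dom (vfmor f) = vfob (vsrc V f);
  vfcod : forall f, cod (vfmor f) = vfob (vtgt V f);
  vfid : forall x, vfmor (idc x) = idc (vfob x);
  vfcomp1 : forall f g, cod f = dom g ->
     vfmor (comp g f) =
       comp (vfmor (ue V (comp (ue V g) (um V f))))
            (comp (vfmor f) (vfmor (lm V (comp (lm V g) (le V f)))));
  vfcomp2 : forall f g, cod f = dom g ->
     vfmor (comp g f) =
       comp (vfmor (um V (comp (ue V g) (um V f))))
            (comp (vfmor g) (vfmor (le V (comp (lm V g) (le V f)))))
}.

(* L-wedges, stated for raw object/morphism assignments (Gob, Gmor) of a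
   would-be functor of variance A -> C (so that F^b can be used directly):
   (c, eta) with eta_x : c -> G(L x) and
   G(L(f)^e) eta_x = G(L(f)^m) eta_y for every f : x -> y in R. *)
Definition isWedgeRaw (R A C : Cat) (V : variance A) (L : functor R A)
  (Gob : Ob A -> Ob C) (Gmor : Arr A -> Arr C) (c : Ob C) (eta : Ob R -> Arr C)
  : Prop :=
  (forall x, dom (eta x) = c /\ cod (eta x) = Gob (fob L x)) /\
  (forall f : Arr R,
     comp (Gmor (ue V (fmor L f))) (eta (dom f)) =
     comp (Gmor (um V (fmor L f))) (eta (cod f))).

Definition wedgeMor (R C : Cat) (c : Ob C) (eta : Ob R -> Arr C)
  (d : Ob C) (theta : Ob R -> Arr C) (h : Arr C) : Prop :=
  dom h = c /\ cod h = d /\ forall x, comp (theta x) h = eta x.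

Definition isEndRaw (R A C : Cat) (V : variance A) (L : functor R A)
  (Gob : Ob A -> Ob C) (Gmor : Arr A -> Arr C) (c : Ob C) (eta : Ob R -> Arr C)
  : Prop :=
  isWedgeRaw V L Gob Gmor c eta /\
  forall d theta, isWedgeRaw V L Gob Gmor d theta ->
    exists h, wedgeMor d theta c eta h /\
      forall h', wedgeMor d theta c eta h' -> h' = h.

Definition isWedge (R A C : Cat) (V : variance A) (L : functor R A)
  (G : vfunctor V C) := isWedgeRaw V L (vfob G) (vfmor G).
Definition isEnd (R A C : Cat) (V : variance A) (L : functor R A)
  (G : vfunctor V C) := isEndRaw V L (vfob G) (vfmor G).

(* Since F(a, b) = F(a, id) F(id, b) when a and b are both covariant or both
   contravariant, the wedge condition of an L-wedge at (f1, f2) splits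
   into a horizontal part, the wedge condition of F^b, and a vertical part.
   So an L-wedge zeta is, for each y, an L1-wedge of F^(L2 y) and factors
   uniquely as omega^(L2 y) o theta_y; the defining property of the functor
   int_{L1} F on arrows, together with the joint monicity of the universal
   wedges omega^b, turns the vertical part into the L2-wedge condition for
   theta.  Morphisms of wedges correspond for the same reason, so the two
   categories of wedges are isomorphic and have the same terminal objects. *)

From Stdlib Require Import FunctionalExtensionality IndefiniteDescription.

Set Implicit Arguments.
Unset Strict Implicit.

Section VarianceFactorizations.
Variables (A : Cat) (V : variance A).

Lemma ue_um_of_E f : vE V f -> ue V f = f /\ um V f = idc (cod f).
Proof.
  intro Hf.
  destruct (@ue_uniq _ V f f (idc (cod f))) as [<- <-]; auto using vM_id, comp_idl.
  now rewrite dom_id.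
Qed.

Lemma ue_um_of_M f : vM V f -> ue V f = idc (dom f) /\ um V f = f.
Proof.
  intro Hf.
  destruct (@ue_uniq _ V f (idc (dom f)) f) as [<- <-]; auto using vE_id, comp_idr.
  now rewrite cod_id.
Qed.

Lemma lm_le_of_E f : vE V f -> lm V f = idc (dom f) /\ le V f = f.
Proof.
  intro Hf.
  destruct (@lm_uniq _ V f (idc (dom f)) f) as [<- <-]; auto using vM_id, comp_idr.
  now rewrite cod_id.
Qed.

Lemma lm_le_of_M f : vM V f -> lm V f = f /\ le V f = idc (cod f).
Proof.
  intro Hf.
  destruct (@lm_uniq _ V f f (idc (cod f))) as [<- <-]; auto using vE_id, comp_idl.
  now rewrite dom_id.
Qed.

Lemma ue_um_id x : ue V (idc x) = idc x /\ um V (idc x) = idc x.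
Proof. destruct (ue_um_of_E (vE_id V x)) as [-> ->]; now rewrite cod_id. Qed.

Lemma dom_ue f : dom (ue V f) = dom f.
Proof. rewrite <- (ue_eq V f) at 2; rewrite dom_comp; auto using ue_cd. Qed.

Lemma cod_um f : cod (um V f) = cod f.
Proof. rewrite <- (ue_eq V f) at 2; rewrite cod_comp; auto using ue_cd. Qed.

Lemma vsrc_E f : vE V f -> vsrc V f = dom f.
Proof. intro Hf; unfold vsrc; rewrite (proj1 (lm_le_of_E Hf)); apply cod_id. Qed.

Lemma vtgt_E f : vE V f -> vtgt V f = cod f.
Proof. intro Hf; unfold vtgt; now rewrite (proj1 (ue_um_of_E Hf)). Qed.

Lemma vsrc_M f : vM V f -> vsrc V f = cod f.
Proof. intro Hf; unfold vsrc; now rewrite (proj1 (lm_le_of_M Hf)). Qed.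

Lemma vtgt_M f : vM V f -> vtgt V f = dom f.
Proof. intro Hf; unfold vtgt; rewrite (proj1 (ue_um_of_M Hf)); apply cod_id. Qed.

End VarianceFactorizations.

Section FunctorOfVariance.
Variables (A C : Cat) (V : variance A) (G : vfunctor V C).

Lemma dom_vfmor_E f : vE V f -> dom (vfmor G f) = vfob G (dom f).
Proof. intro Hf; now rewrite vfdom, vsrc_E. Qed.

Lemma cod_vfmor_E f : vE V f -> cod (vfmor G f) = vfob G (cod f).
Proof. intro Hf; now rewrite vfcod, vtgt_E. Qed.

Lemma dom_vfmor_M f : vM V f -> dom (vfmor G f) = vfob G (cod f).
Proof. intro Hf; now rewrite vfdom, vsrc_M. Qed.

Lemma cod_vfmor_M f : vM V f -> cod (vfmor G f) = vfob G (dom f).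
Proof. intro Hf; now rewrite vfcod, vtgt_M. Qed.

Lemma vfmor_comp_E f g : vE V f -> vE V g -> cod f = dom g ->
  vfmor G (comp g f) = comp (vfmor G g) (vfmor G f).
Proof.
  intros Hf Hg Hfg; rewrite (vfcomp1 G Hfg).
  destruct (ue_um_of_E Hf) as [_ ->], (ue_um_of_E Hg) as [-> _].
  destruct (lm_le_of_E Hf) as [_ ->], (lm_le_of_E Hg) as [-> _].
  rewrite Hfg, comp_idr, <- Hfg, comp_idl.
  destruct (ue_um_of_E Hg) as [-> _], (lm_le_of_E Hf) as [-> _].
  rewrite vfid, <- (dom_vfmor_E Hf), comp_idr; reflexivity.
Qed.

Lemma vfmor_comp_M f g : vM V f -> vM V g -> cod f = dom g ->
  vfmor G (comp g f) = comp (vfmor G f) (vfmor G g).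
Proof.
  intros Hf Hg Hfg; rewrite (vfcomp2 G Hfg).
  destruct (ue_um_of_M Hf) as [_ ->], (ue_um_of_M Hg) as [-> _].
  destruct (lm_le_of_M Hf) as [_ ->], (lm_le_of_M Hg) as [-> _].
  rewrite <- Hfg, comp_idl, Hfg, comp_idr.
  destruct (ue_um_of_M Hf) as [_ ->], (lm_le_of_M Hg) as [_ ->].
  rewrite vfid, <- (dom_vfmor_M Hg), comp_idr; reflexivity.
Qed.

End FunctorOfVariance.

Section ProductVariance.
Variables (A B C : Cat) (VA : variance A) (VB : variance B)
  (F : vfunctor (prodVar VA VB) C).

Lemma dom_vfmor_prod_E a b : vE VA a -> vE VB b ->
  dom (vfmor F (a, b)) = vfob F (dom a, dom b).
Proof. intros Ha Hb; exact (dom_vfmor_E F (f := (a, b)) (conj Ha Hb)). Qed.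

Lemma cod_vfmor_prod_E a b : vE VA a -> vE VB b ->
  cod (vfmor F (a, b)) = vfob F (cod a, cod b).
Proof. intros Ha Hb; exact (cod_vfmor_E F (f := (a, b)) (conj Ha Hb)). Qed.

Lemma dom_vfmor_prod_M a b : vM VA a -> vM VB b ->
  dom (vfmor F (a, b)) = vfob F (cod a, cod b).
Proof. intros Ha Hb; exact (dom_vfmor_M F (f := (a, b)) (conj Ha Hb)). Qed.

Lemma cod_vfmor_prod_M a b : vM VA a -> vM VB b ->
  cod (vfmor F (a, b)) = vfob F (dom a, dom b).
Proof. intros Ha Hb; exact (cod_vfmor_M F (f := (a, b)) (conj Ha Hb)). Qed.

Lemma vfmor_prod_E_split a b : vE VA a -> vE VB b ->
  vfmor F (a, b) = comp (vfmor F (a, idc (cod b))) (vfmor F (idc (dom a), b)).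
Proof.
  intros Ha Hb.
  rewrite <- (vfmor_comp_E F (f := (idc (dom a), b)) (g := (a, idc (cod b)))).
  - simpl; now rewrite comp_idr, comp_idl.
  - exact (conj (vE_id VA _) Hb).
  - exact (conj Ha (vE_id VB _)).
  - simpl; now rewrite cod_id, dom_id.
Qed.

Lemma vfmor_prod_M_split a b : vM VA a -> vM VB b ->
  vfmor F (a, b) = comp (vfmor F (a, idc (dom b))) (vfmor F (idc (cod a), b)).
Proof.
  intros Ha Hb.
  rewrite <- (vfmor_comp_M F (f := (a, idc (dom b))) (g := (idc (cod a), b))).
  - simpl; now rewrite comp_idl, comp_idr.
  - exact (conj Ha (vM_id VB _)).
  - exact (conj (vM_id VA _) Hb).
  - simpl; now rewrite cod_id, dom_id.
Qed.

End ProductVariance.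

Lemma isEndRaw_arrow_ext (R A C : Cat) (V : variance A) (L : functor R A)
  (Gob : Ob A -> Ob C) (Gmor : Arr A -> Arr C) c eta k1 k2 :
  isEndRaw V L Gob Gmor c eta ->
  isWedgeRaw V L Gob Gmor (dom k1) (fun x => comp (eta x) k1) ->
  dom k1 = dom k2 -> cod k1 = c -> cod k2 = c ->
  (forall x, comp (eta x) k1 = comp (eta x) k2) -> k1 = k2.
Proof.
  intros [_ Hterm] Hwedge Hdom Hcod1 Hcod2 Heq.
  destruct (Hterm _ _ Hwedge) as [h [_ Huniq]].
  rewrite (Huniq k1), (Huniq k2); repeat split; auto.
Qed.

Section WedgeIsomorphism.
Variables (R A R' A' C : Cat) (V : variance A) (V' : variance A')
  (L : functor R A) (L' : functor R' A')
  (Gob : Ob A -> Ob C) (Gmor : Arr A -> Arr C)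
  (Gob' : Ob A' -> Ob C) (Gmor' : Arr A' -> Arr C)
  (T : (Ob R -> Arr C) -> Ob R' -> Arr C).

Hypothesis T_wedge : forall c theta, isWedgeRaw V L Gob Gmor c theta ->
  isWedgeRaw V' L' Gob' Gmor' c (T theta).
Hypothesis T_surj : forall c zeta, isWedgeRaw V' L' Gob' Gmor' c zeta ->
  exists theta, isWedgeRaw V L Gob Gmor c theta /\ forall p, zeta p = T theta p.
Hypothesis T_wedgeMor : forall c theta d theta' h,
  isWedgeRaw V L Gob Gmor c theta -> isWedgeRaw V L Gob Gmor d theta' ->
  (wedgeMor c theta d theta' h <-> wedgeMor c (T theta) d (T theta') h).

Lemma T_surj_eq c zeta : isWedgeRaw V' L' Gob' Gmor' c zeta ->
  exists theta, isWedgeRaw V L Gob Gmor c theta /\ zeta = T theta.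
Proof.
  intro Hz; destruct (T_surj Hz) as [theta [Ht Heq]].
  exists theta; split; auto; now apply functional_extensionality.
Qed.

Lemma isEndRaw_transfer c theta : isWedgeRaw V L Gob Gmor c theta ->
  (isEndRaw V L Gob Gmor c theta <-> isEndRaw V' L' Gob' Gmor' c (T theta)).
Proof.
  intro Ht; split.
  - intros [_ Hterm]; split; auto.
    intros d zeta Hz; destruct (T_surj_eq Hz) as [theta' [Ht' ->]].
    destruct (Hterm _ _ Ht') as [h [Hh Huniq]].
    exists h; split; [now apply T_wedgeMor |].
    intros h' Hh'; apply Huniq; now apply (T_wedgeMor h' Ht' Ht).
  - intros [_ Hterm]; split; auto.
    intros d theta' Ht'.
    destruct (Hterm _ _ (T_wedge Ht')) as [h [Hh Huniq]].
    exists h; split; [now apply (T_wedgeMor h Ht' Ht) |].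
    intros h' Hh'; apply Huniq; now apply T_wedgeMor.
Qed.

Lemma ex_isEndRaw_transfer :
  (exists c zeta, isEndRaw V' L' Gob' Gmor' c zeta) <->
  (exists c theta, isEndRaw V L Gob Gmor c theta).
Proof.
  split.
  - intros [c [zeta Hz]]; destruct (T_surj_eq (proj1 Hz)) as [theta [Ht ->]].
    exists c, theta; exact (proj2 (isEndRaw_transfer Ht) Hz).
  - intros [c [theta Ht]]; exists c, (T theta).
    exact (proj1 (isEndRaw_transfer (proj1 Ht)) Ht).
Qed.

End WedgeIsomorphism.

Section IteratedEnd.
Variables (A B C R1 R2 : Cat) (VA : variance A) (VB : variance B)
  (L1 : functor R1 A) (L2 : functor R2 B) (F : vfunctor (prodVar VA VB) C)
  (e : Ob B -> Ob C) (om : Ob B -> Ob R1 -> Arr C) (IF : vfunctor VB C).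

Hypothesis Hend : forall b, isEndRaw VA L1 (fun x => vfob F (x, b))
  (fun f => vfmor F (f, idc b)) (e b) (om b).
Hypothesis HIFob : forall b, vfob IF b = e b.
Hypothesis HIFmor : forall x g,
  comp (vfmor F (idc (fob L1 x), g)) (om (vsrc VB g) x) =
  comp (om (vtgt VB g) x) (vfmor IF g).

Lemma dom_om b x : dom (om b x) = e b.
Proof. exact (proj1 (proj1 (proj1 (Hend b)) x)). Qed.

Lemma cod_om b x : cod (om b x) = vfob F (fob L1 x, b).
Proof. exact (proj2 (proj1 (proj1 (Hend b)) x)). Qed.

Lemma om_wedge b f :
  comp (vfmor F (ue VA (fmor L1 f), idc b)) (om b (dom f)) =
  comp (vfmor F (um VA (fmor L1 f), idc b)) (om b (cod f)).
Proof. exact (proj2 (proj1 (Hend b)) f). Qed.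

Lemma om_arrow_ext b k1 k2 : dom k1 = dom k2 -> cod k1 = e b -> cod k2 = e b ->
  (forall x, comp (om b x) k1 = comp (om b x) k2) -> k1 = k2.
Proof.
  intros Hdom Hcod1 Hcod2; apply (isEndRaw_arrow_ext (Hend b)); auto.
  split.
  - intro x; rewrite dom_comp, cod_comp, cod_om; rewrite ?dom_om; auto.
  - intro f.
    assert (Hue : dom (vfmor F (ue VA (fmor L1 f), idc b)) = cod (om b (dom f))).
    { rewrite dom_vfmor_prod_E, dom_ue, fdom, dom_id, cod_om;
        auto using ue_E, vE_id. }
    assert (Hum : dom (vfmor F (um VA (fmor L1 f), idc b)) = cod (om b (cod f))).
    { rewrite dom_vfmor_prod_M, cod_um, fcod, cod_id, cod_om;
        auto using um_M, vM_id. }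
    rewrite !comp_assoc, om_wedge; rewrite ?dom_om; auto.
Qed.

Lemma om_IF_E x b : vE VB b ->
  comp (vfmor F (idc (fob L1 x), b)) (om (dom b) x) = comp (om (cod b) x) (vfmor IF b).
Proof. intro Hb; rewrite <- (vsrc_E Hb), <- (vtgt_E Hb); apply HIFmor. Qed.

Lemma om_IF_M x b : vM VB b ->
  comp (vfmor F (idc (fob L1 x), b)) (om (cod b) x) = comp (om (dom b) x) (vfmor IF b).
Proof. intro Hb; rewrite <- (vsrc_M Hb), <- (vtgt_M Hb); apply HIFmor. Qed.

Definition lift (theta : Ob R2 -> Arr C) (p : Ob R1 * Ob R2) : Arr C :=
  comp (om (fob L2 (snd p)) (fst p)) (theta (snd p)).

Lemma dom_lift theta x y : cod (theta y) = e (fob L2 y) ->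
  dom (lift theta (x, y)) = dom (theta y).
Proof. intro Hcod; unfold lift; rewrite dom_comp; simpl; rewrite ?dom_om; auto. Qed.

Lemma cod_lift theta x y : cod (theta y) = e (fob L2 y) ->
  cod (lift theta (x, y)) = vfob F (fob L1 x, fob L2 y).
Proof. intro Hcod; unfold lift; rewrite cod_comp; simpl; rewrite ?cod_om, ?dom_om; auto. Qed.

Lemma lift_IF_E theta x y b : cod (theta y) = e (fob L2 y) -> vE VB b -> dom b = fob L2 y ->
  comp (om (cod b) x) (comp (vfmor IF b) (theta y)) =
  comp (vfmor F (idc (fob L1 x), b)) (lift theta (x, y)).
Proof.
  intros Hcod Hb Hdb; unfold lift; simpl.
  rewrite comp_assoc, <- om_IF_E, Hdb, comp_assoc; auto.
  - rewrite dom_om; auto.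
  - rewrite cod_om, dom_vfmor_prod_E, dom_id, Hdb; auto using vE_id.
  - rewrite dom_vfmor_E, HIFob; congruence.
  - rewrite cod_vfmor_E, HIFob, dom_om; auto.
Qed.

Lemma lift_IF_M theta x y b : cod (theta y) = e (fob L2 y) -> vM VB b -> cod b = fob L2 y ->
  comp (om (dom b) x) (comp (vfmor IF b) (theta y)) =
  comp (vfmor F (idc (fob L1 x), b)) (lift theta (x, y)).
Proof.
  intros Hcod Hb Hcb; unfold lift; simpl.
  rewrite comp_assoc, <- om_IF_M, Hcb, comp_assoc; auto.
  - rewrite dom_om; auto.
  - rewrite cod_om, dom_vfmor_prod_M, cod_id, Hcb; auto using vM_id.
  - rewrite dom_vfmor_M, HIFob; congruence.
  - rewrite cod_vfmor_M, HIFob, dom_om; auto.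
Qed.

Lemma vfmor_lift_E theta x y a b :
  cod (theta y) = e (fob L2 y) -> vE VA a -> vE VB b ->
  dom a = fob L1 x -> dom b = fob L2 y ->
  comp (vfmor F (a, b)) (lift theta (x, y)) =
  comp (comp (vfmor F (a, idc (cod b))) (om (cod b) x)) (comp (vfmor IF b) (theta y)).
Proof.
  intros Hcod Ha Hb Hda Hdb.
  rewrite (vfmor_prod_E_split F Ha Hb), Hda, <- comp_assoc, <- lift_IF_E, comp_assoc; auto.
  - rewrite cod_comp, cod_vfmor_E, HIFob, dom_om; auto.
    rewrite dom_vfmor_E, HIFob; congruence.
  - rewrite cod_om, dom_vfmor_prod_E, dom_id, Hda; auto using vE_id.
  - rewrite cod_lift, dom_vfmor_prod_E, dom_id, Hdb; auto using vE_id.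
  - rewrite cod_vfmor_prod_E, dom_vfmor_prod_E, cod_id, dom_id, Hda; auto using vE_id.
Qed.

Lemma vfmor_lift_M theta x y a b :
  cod (theta y) = e (fob L2 y) -> vM VA a -> vM VB b ->
  cod a = fob L1 x -> cod b = fob L2 y ->
  comp (vfmor F (a, b)) (lift theta (x, y)) =
  comp (comp (vfmor F (a, idc (dom b))) (om (dom b) x)) (comp (vfmor IF b) (theta y)).
Proof.
  intros Hcod Ha Hb Hca Hcb.
  rewrite (vfmor_prod_M_split F Ha Hb), Hca, <- comp_assoc, <- lift_IF_M, comp_assoc; auto.
  - rewrite cod_comp, cod_vfmor_M, HIFob, dom_om; auto.
    rewrite dom_vfmor_M, HIFob; congruence.
  - rewrite cod_om, dom_vfmor_prod_M, cod_id, Hca; auto using vM_id.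
  - rewrite cod_lift, dom_vfmor_prod_M, cod_id, Hcb; auto using vM_id.
  - rewrite cod_vfmor_prod_M, dom_vfmor_prod_M, cod_id, dom_id, Hca; auto using vM_id.
Qed.

Lemma cod_IF_wedge c theta y : isWedge L2 IF c theta -> cod (theta y) = e (fob L2 y).
Proof. intros [Htype _]; rewrite <- HIFob; apply Htype. Qed.

Lemma lift_wedge c theta :
  isWedge L2 IF c theta -> isWedge (prodFunctor L1 L2) F c (lift theta).
Proof.
  intro Ht; pose proof (fun y => cod_IF_wedge y Ht) as Hcod.
  split.
  - intros [x y]; rewrite dom_lift, cod_lift; auto.
    split; [apply (proj1 (proj1 Ht y)) | reflexivity].
  - intros [f1 f2]; cbn -[lift].
    rewrite (vfmor_lift_E (x := dom f1)), (vfmor_lift_M (x := cod f1)), ue_cd,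
      om_wedge, (proj2 Ht f2); auto using ue_E, um_M.
    all: rewrite ?dom_ue, ?cod_um, ?fdom, ?fcod; reflexivity.
Qed.

Lemma wedge_slice c zeta y : isWedge (prodFunctor L1 L2) F c zeta ->
  isWedgeRaw VA L1 (fun x => vfob F (x, fob L2 y))
    (fun f => vfmor F (f, idc (fob L2 y))) c (fun x => zeta (x, y)).
Proof.
  intros [Htype Hw]; split.
  - intro x; exact (Htype (x, y)).
  - intro f; generalize (Hw (f, idc y)); cbn.
    rewrite fid; destruct (ue_um_id VB (fob L2 y)) as [-> ->].
    now rewrite dom_id, cod_id.
Qed.

Lemma wedge_vertical c zeta x g : isWedge (prodFunctor L1 L2) F c zeta ->
  comp (vfmor F (idc (fob L1 x), ue VB (fmor L2 g))) (zeta (x, dom g)) =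
  comp (vfmor F (idc (fob L1 x), um VB (fmor L2 g))) (zeta (x, cod g)).
Proof.
  intros [_ Hw]; generalize (Hw (idc x, g)); cbn.
  rewrite fid; destruct (ue_um_id VA (fob L1 x)) as [-> ->].
  now rewrite dom_id, cod_id.
Qed.

Lemma lift_wedge_reflect c theta :
  (forall y, dom (theta y) = c) -> (forall y, cod (theta y) = e (fob L2 y)) ->
  isWedge (prodFunctor L1 L2) F c (lift theta) -> isWedge L2 IF c theta.
Proof.
  intros Hdom Hcod Hw; split.
  - intro y; rewrite HIFob; auto.
  - intro g.
    set (b := ue VB (fmor L2 g)); set (b' := um VB (fmor L2 g)).
    assert (Hb : vE VB b) by apply ue_E.
    assert (Hb' : vM VB b') by apply um_M.
    assert (Hdb : dom b = fob L2 (dom g)) by (unfold b; rewrite dom_ue; apply fdom).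
    assert (Hcb' : cod b' = fob L2 (cod g)) by (unfold b'; rewrite cod_um; apply fcod).
    assert (Hbb' : cod b = dom b') by apply ue_cd.
    assert (Hb_theta : cod (theta (dom g)) = dom (vfmor IF b))
      by (rewrite dom_vfmor_E, HIFob, Hdb; auto).
    assert (Hb'_theta : cod (theta (cod g)) = dom (vfmor IF b'))
      by (rewrite dom_vfmor_M, HIFob, Hcb'; auto).
    apply (om_arrow_ext (b := cod b)).
    + rewrite !dom_comp, !Hdom; auto.
    + rewrite cod_comp, cod_vfmor_E, HIFob; auto.
    + rewrite cod_comp, cod_vfmor_M, HIFob, Hbb'; auto.
    + intro x.
      rewrite (lift_IF_E x (y := dom g)), Hbb', (lift_IF_M x (y := cod g)); auto.
      now apply (wedge_vertical (c := c)).
Qed.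

Lemma lift_wedge_surj c zeta : isWedge (prodFunctor L1 L2) F c zeta ->
  exists theta, isWedge L2 IF c theta /\ forall p, zeta p = lift theta p.
Proof.
  intro Hz.
  assert (Hmed : forall y, exists h,
    wedgeMor c (fun x => zeta (x, y)) (e (fob L2 y)) (om (fob L2 y)) h).
  { intro y; destruct (proj2 (Hend (fob L2 y)) c _ (wedge_slice y Hz)) as [h [Hh _]].
    now exists h. }
  destruct (functional_choice _ Hmed) as [theta Htheta].
  assert (Hlift : forall p, zeta p = lift theta p).
  { intros [x y]; symmetry; apply (Htheta y). }
  exists theta; split; auto.
  apply lift_wedge_reflect; try apply Htheta.
  replace (lift theta) with zeta; auto.
  now apply functional_extensionality.
Qed.

Lemma lift_inj c theta theta' : isWedge L2 IF c theta -> isWedge L2 IF c theta' ->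
  (forall p, lift theta p = lift theta' p) -> forall y, theta y = theta' y.
Proof.
  intros Ht Ht' Heq y; apply (om_arrow_ext (b := fob L2 y)).
  - rewrite (proj1 (proj1 Ht y)), (proj1 (proj1 Ht' y)); reflexivity.
  - exact (cod_IF_wedge y Ht).
  - exact (cod_IF_wedge y Ht').
  - intro x; exact (Heq (x, y)).
Qed.

Lemma wedgeMor_lift c theta d theta' h :
  isWedge L2 IF c theta -> isWedge L2 IF d theta' ->
  (wedgeMor c theta d theta' h <->
   @wedgeMor (prodCat R1 R2) C c (lift theta) d (lift theta') h).
Proof.
  intros Ht Ht'.
  pose proof (fun y => cod_IF_wedge y Ht') as Hcod'.
  pose proof (fun y => proj1 (proj1 Ht' y)) as Hdom'.
  split; intros (Hdh & Hch & Hcomm); repeat split; auto.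
  - intros [x y]; unfold lift; cbn.
    rewrite <- comp_assoc, Hcomm; rewrite ?dom_om; congruence.
  - intro y; apply (om_arrow_ext (b := fob L2 y)).
    + rewrite dom_comp, (proj1 (proj1 Ht y)); congruence.
    + rewrite cod_comp; congruence.
    + exact (cod_IF_wedge y Ht).
    + intro x; rewrite comp_assoc; [exact (Hcomm (x, y)) | congruence |].
      rewrite dom_om; auto.
Qed.

End IteratedEnd.

Theorem mainTheorem6 (A B C R1 R2 : Cat) (VA : variance A) (VB : variance B)
  (L1 : functor R1 A) (L2 : functor R2 B)
  (F : vfunctor (prodVar VA VB) C)
  (e : Ob B -> Ob C) (om : Ob B -> Ob R1 -> Arr C)
  (* for each b, (e b, om b) is the end of F^b := (x |-> F(x,b), f |-> F(f,id_b)) *)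
  (Hend : forall b : Ob B,
      isEndRaw VA L1 (fun x => vfob F (x, b)) (fun f => vfmor F (f, idc b))
               (e b) (om b))
  (* IF is the functor of variance int_{L1} F : B -> C *)
  (IF : vfunctor VB C)
  (HIFob : forall b, vfob IF b = e b)
  (HIFmor : forall (x : Ob R1) (g : Arr B),
      comp (vfmor F (idc (fob L1 x), g)) (om (vsrc VB g) x) =
      comp (om (vtgt VB g) x) (vfmor IF g)) :
  let L := prodFunctor L1 L2 in
  let tl := fun (theta : Ob R2 -> Arr C) (p : Ob (prodCat R1 R2)) =>
              comp (om (fob L2 (snd p)) (fst p)) (theta (snd p)) in
  (* the assignment sends L2-wedges of IF to L-wedges of F *)
  (forall c theta, isWedge L2 IF c theta -> isWedge L F c (tl theta)) /\
  (* it is surjective on objects *)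
  (forall c zeta, isWedge L F c zeta ->
     exists theta, isWedge L2 IF c theta /\ forall p, zeta p = tl theta p) /\
  (* it is injective on objects *)
  (forall c theta theta', isWedge L2 IF c theta -> isWedge L2 IF c theta' ->
     (forall p, tl theta p = tl theta' p) -> forall y, theta y = theta' y) /\
  (* it is the identity on morphisms, and bijective on hom-sets *)
  (forall c theta d theta' h, isWedge L2 IF c theta -> isWedge L2 IF d theta' ->
     (wedgeMor c theta d theta' h <-> @wedgeMor (prodCat R1 R2) C c (tl theta) d (tl theta') h)) /\
  (* consequences for ends *)
  (forall c theta, isWedge L2 IF c theta ->
     (isEnd L2 IF c theta <-> isEnd L F c (tl theta))) /\
  ((exists c zeta, isEnd L F c zeta) <-> (exists c theta, isEnd L2 IF c theta)).
Proof.
  intros L tl.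
  pose proof (lift_wedge (L2 := L2) Hend HIFob HIFmor) as Hlift.
  pose proof (lift_wedge_surj (L2 := L2) Hend HIFob HIFmor) as Hsurj.
  pose proof (wedgeMor_lift (L2 := L2) Hend HIFob) as Hmor.
  split; [exact Hlift |].
  split; [exact Hsurj |].
  split; [exact (lift_inj Hend HIFob) |].
  split; [exact Hmor |].
  split.
  - intros c theta Ht; exact (isEndRaw_transfer Hlift Hsurj Hmor Ht).
  - exact (ex_isEndRaw_transfer Hlift Hsurj Hmor).
Qed.
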